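(* Let $L:\mathbb{R}^d\times\mathbb{R}^{d+1}\to\mathbb{R}$ be such that $L(w,z)$ is convex in $w$ for every $z$, let $\nabla_1 L(w,z)$ denote a (fixed choice of) sub-gradient of $L(\cdot,z)$ at $w$, and assume there are constants $A,B\ge0$ with $\|\nabla_1 L(w,z)\|^2\le A L(w,z)+B$ for all $w\in\mathbb{R}^d$, $z\in\mathbb{R}^{d+1}$. Let $z_1,\dots,z_n\in\mathbb{R}^{d+1}$ be training data, let $g\ge 0$, and let $\eta>0$ with $1-0.5A\eta>0$. For $w\in\mathbb{R}^d$ and $\gamma\ge0$ set \[ R(w,\gamma)=\frac1n\sum_{i=1}^n L(w,z_i)+\gamma\|w\|_1 .\] Let $\hat w_1=w_1=0$ and define recursively for $t=1,2,\ldots$ \[ w_{t+1}=T\big(w_t-\eta\nabla_1 L(w_t,z_{i_t}),\ g\eta\big),\qquad \hat w_{t+1}=\hat w_t+\frac{w_{t+1}-\hat w_t}{t+1}, \] where $i_1,i_2,\ldots$ are independent and each uniformly distributed on $\{1,\dots,n\}$. Then for every $T\ge1$ and every $\bar w\in\mathbb{R}^d$, \[ \mathbf{E}_{i_1,\dots,i_T}\Big[(1-0.5A\eta)\,R\Big(\hat w_T,\tfrac{g}{1-0.5A\eta}\Big)\Big] \le \mathbf{E}_{i_1,\dots,i_T}\Big[\frac{1-0.5A\eta}{T}\sum_{i=1}^T R\Big(w_i,\tfrac{g}{1-0.5A\eta}\Big)\Big] \le \frac{\eta}{2}B+\frac{\|\bar w\|^2}{2\eta T}+R(\bar w,g). 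\]
   Context: $\|\cdot\|$ is the Euclidean norm and $\|\cdot\|_1$ the $1$-norm. For $v\in\mathbb{R}^d$ and $\alpha\ge0$, $T(v,\alpha)=(T(v_1,\alpha),\dots,T(v_d,\alpha))$ with $T(v_j,\alpha)=\max(0,v_j-\alpha)$ if $v_j>0$ and $T(v_j,\alpha)=\min(0,v_j+\alpha)$ otherwise. *)

(* R an abstract realFieldType (the statement is purely algebraic). *)
From HB Require Import structures.
From mathcomp Require Import all_boot all_order all_algebra.
Set Implicit Arguments. Unset Strict Implicit. Unset Printing Implicit Defensive.
Import Order.TTheory GRing.Theory Num.Theory.
Local Open Scope ring_scope.

Section Defs.
Variable R : realFieldType.

Definition sqnorm (d : nat) (v : 'rV[R]_d) : R := \sum_(j < d) v 0 j ^+ 2.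
Definition norm1 (d : nat) (v : 'rV[R]_d) : R := \sum_(j < d) `|v 0 j|.
Definition dotv (d : nat) (u v : 'rV[R]_d) : R := \sum_(j < d) u 0 j * v 0 j.

Definition soft1 (x alpha : R) : R :=
  if 0 < x then Num.max 0 (x - alpha) else Num.min 0 (x + alpha).
Definition softT (d : nat) (v : 'rV[R]_d) (alpha : R) : 'rV[R]_d :=
  \row_(j < d) soft1 (v 0 j) alpha.

Definition convex_fun (d : nat) (f : 'rV[R]_d -> R) : Prop :=
  forall (u v : 'rV[R]_d) (t : R), 0 <= t -> t <= 1 ->
    f (t *: u + (1 - t) *: v) <= t * f u + (1 - t) * f v.

Definition risk (d n : nat) (L : 'rV[R]_d -> 'rV[R]_d.+1 -> R)
  (z : 'I_n -> 'rV[R]_d.+1) (w : 'rV[R]_d) (gam : R) : R :=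
  (\sum_(i < n) L w (z i)) / n%:R + gam * norm1 w.

(* iterates: iter_w k = w_{k+1}, iter_hat k = hat w_{k+1};
   zs k is the data point z_{i_{k+1}} used at step k+1 *)
Fixpoint iter_w (d : nat) (grad : 'rV[R]_d -> 'rV[R]_d.+1 -> 'rV[R]_d)
  (g eta : R) (zs : nat -> 'rV[R]_d.+1) (k : nat) : 'rV[R]_d :=
  match k with
  | 0 => 0
  | k'.+1 => let w := iter_w grad g eta zs k' in
             softT (w - eta *: grad w (zs k')) (g * eta)
  end.

Fixpoint iter_hat (d : nat) (grad : 'rV[R]_d -> 'rV[R]_d.+1 -> 'rV[R]_d)
  (g eta : R) (zs : nat -> 'rV[R]_d.+1) (k : nat) : 'rV[R]_d :=
  match k with
  | 0 => 0
  | k'.+1 => let h := iter_hat grad g eta zs k' in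
             h + (k'.+2%:R)^-1 *: (iter_w grad g eta zs k'.+1 - h)
  end.

Definition data_seq (d n T : nat) (z : 'I_n -> 'rV[R]_d.+1)
  (f : {ffun 'I_T -> 'I_n}) (k : nat) : 'rV[R]_d.+1 :=
  if insub k is Some i then z (f i) else 0.

(* expectation over i_1,...,i_T independent and uniform on {1..n} *)
Definition Eunif (n T : nat) (X : {ffun 'I_T -> 'I_n} -> R) : R :=
  (\sum_(f : {ffun 'I_T -> 'I_n}) X f) / (n ^ T)%:R.

End Defs.

(* One step w -> T(w - eta u, g eta) satisfies the
   three-point inequality of the proximal map of [g eta |.|_1]; combined with the
   subgradient inequality and the growth bound |u|^2 <= A L + B it shows that
   ||w_t - wb||^2 + 2 g eta |w_t|_1 decreases by at least
   2 eta ((1 - A eta/2) L(w_t, z_(i_t)) + g |w_t|_1 - L(wb, z_(i_t))) - eta^2 B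
   - 2 g eta |wb|_1, which telescopes to a pathwise regret bound.  As w_t only
   depends on i_1, ..., i_(t-1), averaging over i_t turns L(w_t, z_(i_t)) into the
   empirical risk of w_t.  The bound for the running average hat w_T is Jensen's
   inequality for the convex function R(., gamma). *)

From HB Require Import structures.
From mathcomp Require Import all_boot all_order all_algebra.
From mathcomp Require Import perm lra ring.
Import Order.TTheory GRing.Theory Num.Theory.
Local Open Scope ring_scope.
Set Implicit Arguments. Unset Strict Implicit.

Section Norms.
Variable R : realFieldType.

Lemma soft1_sub_sqr_le (x a b : R) : 0 <= a ->
  (soft1 x a - b) ^+ 2 <= (x - b) ^+ 2 + 2 * a * (`|b| - `|soft1 x a|).
Proof.
move=> a_ge0; rewrite /soft1.
have [b_ge0|b_lt0] := lerP 0 b; [rewrite (ger0_norm b_ge0)|rewrite (ltr0_norm b_lt0)];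
  (case: ifP => hx; [|move/negbT: hx; rewrite -leNgt => hx]);
  rewrite ?maxEle ?minEle; (case: ifP => h; [|move/negbT: h; rewrite -ltNge => h]);
  rewrite ?normr0 //=;
  try (rewrite ger0_norm; last lra; nra); try (rewrite ler0_norm; last lra; nra); nra.
Qed.

Lemma sqnorm_ge0 d (v : 'rV[R]_d) : 0 <= sqnorm v.
Proof. by apply: sumr_ge0 => j _; exact: sqr_ge0. Qed.

Lemma sqnormN d (v : 'rV[R]_d) : sqnorm (- v) = sqnorm v.
Proof. by apply: eq_bigr => j _; rewrite mxE sqrrN. Qed.

Lemma norm1_ge0 d (v : 'rV[R]_d) : 0 <= norm1 v.
Proof. by apply: sumr_ge0 => j _; exact: normr_ge0. Qed.

Lemma norm1_0 d : norm1 (0 : 'rV[R]_d) = 0.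
Proof. by rewrite /norm1 big1 // => j _; rewrite mxE normr0. Qed.

Lemma norm1_convex d : convex_fun (@norm1 R d).
Proof.
move=> u v t t_ge0 t_le1; rewrite /norm1 !mulr_sumr -big_split /=.
apply: ler_sum => j _; rewrite !mxE; apply: (le_trans (ler_normD _ _)).
by rewrite !normrM (ger0_norm t_ge0) (ger0_norm (_ : 0 <= 1 - t)) ?subr_ge0.
Qed.

(* The coordinatewise bound is the three-point inequality for the proximal map
   of [a |.|], i.e. for soft thresholding. *)
Lemma softT_sub_sqnorm_le d (w wb u : 'rV[R]_d) (eta a : R) : 0 <= a ->
  sqnorm (softT (w - eta *: u) a - wb) <=
  sqnorm (w - wb) - 2 * eta * dotv u (w - wb) + eta ^+ 2 * sqnorm u
  + 2 * a * (norm1 wb - norm1 (softT (w - eta *: u) a)).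
Proof.
move=> a_ge0; rewrite /sqnorm /dotv /norm1 -sumrB !mulr_sumr -sumrB -!big_split /=.
apply: ler_sum => j _; rewrite !mxE.
apply: (le_trans (soft1_sub_sqr_le _ (wb 0 j) a_ge0)).
by rewrite le_eqVlt; apply/orP; left; apply/eqP; ring.
Qed.

End Norms.

Section Expectation.
Variables (R : realFieldType) (n T : nat).
Implicit Types (X Y : {ffun 'I_T -> 'I_n} -> R).

Lemma Eunif_le X Y : (forall f, X f <= Y f) -> Eunif X <= Eunif Y.
Proof.
by move=> XY; apply: ler_wpM2r; [rewrite invr_ge0 ler0n | exact: ler_sum].
Qed.

Lemma eq_Eunif X Y : X =1 Y -> Eunif X = Eunif Y.
Proof. by move=> XY; rewrite /Eunif (eq_bigr _ (fun f _ => XY f)). Qed.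

Lemma EunifD X Y : Eunif (fun f => X f + Y f) = Eunif X + Eunif Y.
Proof. by rewrite /Eunif big_split mulrDl. Qed.

Lemma EunifZ (a : R) X : Eunif (fun f => a * X f) = a * Eunif X.
Proof. by rewrite /Eunif -mulr_sumr mulrA. Qed.

Lemma Eunif_sum m (X : 'I_m -> {ffun 'I_T -> 'I_n} -> R) :
  Eunif (fun f => \sum_(k < m) X k f) = \sum_(k < m) Eunif (X k).
Proof. by rewrite /Eunif exchange_big mulr_suml. Qed.

Lemma Eunif_cst (x : R) : (0 < n)%N -> Eunif (fun _ : {ffun 'I_T -> 'I_n} => x) = x.
Proof.
move=> n_gt0; rewrite /Eunif sumr_const card_ffun !card_ord -[x *+ _]mulr_natr.
by rewrite mulfK // pnatr_eq0 -lt0n expn_gt0 n_gt0.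
Qed.

Definition swap_at (k : 'I_T) (a b : 'I_n) (f : {ffun 'I_T -> 'I_n}) :
  {ffun 'I_T -> 'I_n} := [ffun i => if i == k then tperm a b (f i) else f i].

Lemma swap_atK k a b : involutive (swap_at k a b).
Proof.
move=> f; apply/ffunP => i; rewrite !ffunE.
by case: eqP => // _; rewrite tpermK.
Qed.

Lemma swap_at_eq k a b f : (swap_at k a b f k == b) = (f k == a).
Proof. by rewrite ffunE eqxx -[X in _ == X](tpermL a b) (inj_eq perm_inj). Qed.

(* Averaging over the value [f k] is free when [G] ignores it: swapping two
   values of [f k] is a bijection between the fibres of [f |-> f k]. *)
Lemma sum_ffun_indep (k : 'I_T) (G : {ffun 'I_T -> 'I_n} -> 'I_n -> R) :
  (forall f f' : {ffun 'I_T -> 'I_n}, (forall i, i != k -> f i = f' i) -> G f =1 G f') ->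
  n%:R * \sum_f G f (f k) = \sum_f \sum_a G f a.
Proof.
move=> G_indep.
pose S a c := \sum_(f : {ffun 'I_T -> 'I_n} | f k == a) G f c.
have S_fibre a b c : S a c = S b c.
  rewrite /S (reindex_inj (can_inj (swap_atK k b a))) /=.
  apply: eq_big => f; first by rewrite swap_at_eq.
  by move=> _; rewrite (G_indep _ f) // => i /negbTE ik; rewrite ffunE ik.
have fibres c : \sum_f G f c = \sum_a S a c.
  exact: (partition_big (fun f : {ffun 'I_T -> 'I_n} => f k) predT).
rewrite exchange_big mulr_sumr (partition_big (fun f : {ffun 'I_T -> 'I_n} => f k) predT) //=.
apply: eq_bigr => a _; rewrite fibres.
have -> : \sum_b S b a = n%:R * S a a.
  rewrite (eq_bigr (fun=> S a a)) => [|b _]; last exact: S_fibre.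
  by rewrite sumr_const card_ord mulr_natl.
by rewrite mulr_sumr; apply: eq_bigr => f /eqP ->.
Qed.

Lemma Eunif_indep (k : 'I_T) (G : {ffun 'I_T -> 'I_n} -> 'I_n -> R) :
  (0 < n)%N ->
  (forall f f' : {ffun 'I_T -> 'I_n}, (forall i, i != k -> f i = f' i) -> G f =1 G f') ->
  Eunif (fun f => G f (f k)) = Eunif (fun f => (\sum_a G f a) / n%:R).
Proof.
move=> n_gt0 G_indep; rewrite /Eunif -mulr_suml -(sum_ffun_indep G_indep).
by rewrite [n%:R * _]mulrC mulfK // pnatr_eq0 -lt0n.
Qed.

End Expectation.

Section Descent.
Variables (R : realFieldType) (d : nat).
Variables (L : 'rV[R]_d -> 'rV[R]_d.+1 -> R) (grad : 'rV[R]_d -> 'rV[R]_d.+1 -> 'rV[R]_d).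
Variables (A B g eta : R).
Hypothesis subgrad : forall (w v : 'rV[R]_d) (zz : 'rV[R]_d.+1),
  L w zz + dotv (grad w zz) (v - w) <= L v zz.
Hypothesis grad_growth : forall (w : 'rV[R]_d) (zz : 'rV[R]_d.+1),
  sqnorm (grad w zz) <= A * L w zz + B.
Hypotheses (g_ge0 : 0 <= g) (eta_gt0 : 0 < eta).
Variables (zs : nat -> 'rV[R]_d.+1) (wb : 'rV[R]_d).
Local Notation w := (iter_w grad g eta zs).

Lemma subgrad_le_dotv (v : 'rV[R]_d) (zz : 'rV[R]_d.+1) :
  L v zz - L wb zz <= dotv (grad v zz) (v - wb).
Proof.
have dotvN : dotv (grad v zz) (wb - v) = - dotv (grad v zz) (v - wb).
  by rewrite /dotv -sumrN; apply: eq_bigr => j _; rewrite !mxE; ring.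
by have := subgrad v wb zz; rewrite dotvN; lra.
Qed.

Lemma iter_w_potential T :
  2 * eta * \sum_(k < T) ((1 - A * eta / 2) * L (w k) (zs k) + g * norm1 (w k) - L wb (zs k))
  + sqnorm (w T - wb) + 2 * g * eta * norm1 (w T)
  <= sqnorm wb + T%:R * (eta ^+ 2 * B + 2 * g * eta * norm1 wb).
Proof.
elim: T => [|T IH]; first by rewrite big_ord0 /= sub0r sqnormN norm1_0; lra.
rewrite big_ord_recr /= -[T.+1]addn1 natrD.
set u := grad (w T) (zs T).
have ge_ge0 : 0 <= g * eta by rewrite mulr_ge0 // ltW.
have step := softT_sub_sqnorm_le (w T) wb u eta ge_ge0.
have lin : 2 * eta * (L (w T) (zs T) - L wb (zs T)) <= 2 * eta * dotv u (w T - wb).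
  by rewrite ler_wpM2l ?subgrad_le_dotv // mulr_ge0 // ltW.
have quad : eta ^+ 2 * sqnorm u <= eta ^+ 2 * (A * L (w T) (zs T) + B).
  by rewrite ler_wpM2l ?sqr_ge0 ?grad_growth.
set S := \sum_(i < T) _ in IH *; set s := softT _ _ in step *.
lra.
Qed.

Lemma iter_w_regret T :
  \sum_(k < T) ((1 - A * eta / 2) * L (w k) (zs k) + g * norm1 (w k))
  <= \sum_(k < T) L wb (zs k)
     + (sqnorm wb + T%:R * (eta ^+ 2 * B + 2 * g * eta * norm1 wb)) / (2 * eta).
Proof.
have pot := iter_w_potential T; rewrite sumrB in pot.
have pot_ge0 : 0 <= sqnorm (w T - wb) + 2 * g * eta * norm1 (w T).
  by rewrite addr_ge0 ?sqnorm_ge0 // !mulr_ge0 ?norm1_ge0 // ltW.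
rewrite -lerBlDl ler_pdivlMr ?mulr_gt0 //.
set S1 := \sum_(k < T) _ in pot *; set S2 := \sum_(k < T) _ in pot *.
lra.
Qed.

End Descent.

Section Averaging.
Variables (R : realFieldType) (d : nat).

Lemma risk_convex n (L : 'rV[R]_d -> 'rV[R]_d.+1 -> R) (z : 'I_n -> 'rV[R]_d.+1) (gam : R) :
  (forall zz, convex_fun (L^~ zz)) -> 0 <= gam -> convex_fun (fun w => risk L z w gam).
Proof.
move=> L_convex gam_ge0 u v t t_ge0 t_le1; rewrite /risk.
have sum_le : \sum_(i < n) L (t *: u + (1 - t) *: v) (z i)
    <= t * \sum_(i < n) L u (z i) + (1 - t) * \sum_(i < n) L v (z i).
  by rewrite !mulr_sumr -big_split /=; apply: ler_sum => i _; exact: L_convex.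
have q_ge0 : 0 <= (n%:R : R)^-1 by rewrite invr_ge0.
have := ler_wpM2r q_ge0 sum_le; rewrite mulrDl -!mulrA.
have := ler_wpM2l gam_ge0 (norm1_convex u v t_ge0 t_le1).
set a := \sum_(i < n) L u (z i); set b := \sum_(i < n) L v (z i); set q := n%:R^-1.
lra.
Qed.

Lemma iter_hat_convex_le (grad : 'rV[R]_d -> 'rV[R]_d.+1 -> 'rV[R]_d) g eta zs
    (F : 'rV[R]_d -> R) : convex_fun F -> forall k,
  k.+1%:R * F (iter_hat grad g eta zs k) <= \sum_(m < k.+1) F (iter_w grad g eta zs m).
Proof.
move=> F_convex; elim=> [|k IH]; first by rewrite big_ord1 /= mul1r.
rewrite big_ord_recr; set w := iter_w grad g eta zs k.+1; rewrite /=.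
set h := iter_hat grad g eta zs k in IH *.
set N : R := k.+2%:R; have N_gt0 : 0 < N by rewrite ltr0n.
have s_ge0 : 0 <= N^-1 by rewrite invr_ge0 ltW.
have s_le1 : N^-1 <= 1 by rewrite invf_le1 // ler1n.
have -> : h + N^-1 *: (w - h) = N^-1 *: w + (1 - N^-1) *: h.
  by rewrite scalerBr scalerBl scale1r addrCA addrC.
apply: (le_trans (ler_wpM2l (ltW N_gt0) (F_convex w h _ s_ge0 s_le1))).
have -> : N * (N^-1 * F w + (1 - N^-1) * F h) = F w + k.+1%:R * F h.
  have -> : k.+1%:R = N - 1 :> R by rewrite /N -[k.+2]addn1 natrD addrK.
  by field; rewrite -(natrD R 2 k) pnatr_eq0.
lra.
Qed.

Lemma iter_hat_convex_avg (grad : 'rV[R]_d -> 'rV[R]_d.+1 -> 'rV[R]_d) g eta zs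
    (F : 'rV[R]_d -> R) T : convex_fun F -> (0 < T)%N ->
  F (iter_hat grad g eta zs T.-1) <= T%:R^-1 * \sum_(k < T) F (iter_w grad g eta zs k).
Proof.
move=> F_convex T_gt0; have := iter_hat_convex_le grad g eta zs F_convex T.-1.
by rewrite prednK // -ler_pdivlMl ?ltr0n.
Qed.

End Averaging.

Section Sampling.
Variables (R : realFieldType) (d n T : nat) (z : 'I_n -> 'rV[R]_d.+1).
Variables (grad : 'rV[R]_d -> 'rV[R]_d.+1 -> 'rV[R]_d) (g eta : R).
Hypothesis n_gt0 : (0 < n)%N.
Local Notation W f := (iter_w grad g eta (data_seq z f)).

Lemma data_seq_ord (f : {ffun 'I_T -> 'I_n}) (k : 'I_T) : data_seq z f k = z (f k).
Proof. by rewrite /data_seq; case: insubP => [i _ /val_inj -> |]; rewrite ?ltn_ord. Qed.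

Lemma iter_w_data_seq_indep (k : 'I_T) (f f' : {ffun 'I_T -> 'I_n}) :
  (forall i, i != k -> f i = f' i) -> W f k = W f' k.
Proof.
move=> ff'; have : forall m, (m < k)%N -> data_seq z f m = data_seq z f' m.
  move=> m m_lt_k; rewrite /data_seq; case: insubP => // i _ im.
  by rewrite ff' // neq_ltn im m_lt_k.
elim: (nat_of_ord k) => [//|m IH] /= same.
by rewrite IH ?same // => j j_lt; apply: same; exact: ltnW.
Qed.

Lemma Eunif_data_seq (k : 'I_T) (Phi : {ffun 'I_T -> 'I_n} -> 'rV[R]_d.+1 -> R) :
  (forall f f' : {ffun 'I_T -> 'I_n}, (forall i, i != k -> f i = f' i) -> Phi f =1 Phi f') ->
  Eunif (fun f => Phi f (data_seq z f k)) = Eunif (fun f => (\sum_a Phi f (z a)) / n%:R).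
Proof.
move=> Phi_indep; rewrite -(Eunif_indep (k := k) (G := fun f a => Phi f (z a))) //.
  by apply: eq_Eunif => f; rewrite data_seq_ord.
by move=> f f' ff' a; apply: Phi_indep.
Qed.

Lemma Eunif_data_seq_cst (Phi : 'rV[R]_d.+1 -> R) (k : 'I_T) :
  Eunif (fun f : {ffun 'I_T -> 'I_n} => Phi (data_seq z f k)) = (\sum_a Phi (z a)) / n%:R.
Proof.
have /= E := Eunif_data_seq (k := k) (Phi := fun _ => Phi) (fun _ _ _ _ => erefl).
by rewrite E Eunif_cst.
Qed.

Lemma Eunif_avg_risk (L : 'rV[R]_d -> 'rV[R]_d.+1 -> R) (a b : R) :
  Eunif (fun f : {ffun 'I_T -> 'I_n} => a / T%:R * \sum_(k < T) risk L z (W f k) b)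
  = T%:R^-1 * Eunif (fun f : {ffun 'I_T -> 'I_n} =>
      \sum_(k < T) (a * L (W f k) (data_seq z f k) + a * b * norm1 (W f k))).
Proof.
have risk_k (k : 'I_T) : Eunif (fun f : {ffun 'I_T -> 'I_n} => a * risk L z (W f k) b)
    = Eunif (fun f : {ffun 'I_T -> 'I_n} => a * L (W f k) (data_seq z f k) + a * b * norm1 (W f k)).
  have /= E := Eunif_data_seq (k := k) (Phi := fun f => L (W f k))
    (fun f f' ff' zz => congr1 (L^~ zz) (iter_w_data_seq_indep ff')).
  by rewrite EunifD !EunifZ E -!EunifZ -EunifD; apply: eq_Eunif => f; rewrite /risk mulrDr !mulrA.
rewrite Eunif_sum -(eq_bigr _ (fun k _ => risk_k k)) -Eunif_sum -EunifZ.
by apply: eq_Eunif => f; rewrite -mulr_sumr mulrA [T%:R^-1 * a]mulrC.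
Qed.

End Sampling.

Theorem theorem2 (R : realFieldType) (d n : nat)
  (L : 'rV[R]_d -> 'rV[R]_d.+1 -> R)
  (grad : 'rV[R]_d -> 'rV[R]_d.+1 -> 'rV[R]_d)
  (A B : R) (z : 'I_n -> 'rV[R]_d.+1) (g eta : R) :
  (forall zz : 'rV[R]_d.+1, convex_fun (fun w => L w zz)) ->
  (forall (w v : 'rV[R]_d) (zz : 'rV[R]_d.+1),
      L w zz + dotv (grad w zz) (v - w) <= L v zz) ->
  0 <= A -> 0 <= B ->
  (forall (w : 'rV[R]_d) (zz : 'rV[R]_d.+1),
      sqnorm (grad w zz) <= A * L w zz + B) ->
  (0 < n)%N -> 0 <= g -> 0 < eta -> 0 < 1 - A * eta / 2 ->
  forall (T : nat) (wbar : 'rV[R]_d), (0 < T)%N ->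
  let c := 1 - A * eta / 2 in
  let gam := g / c in
  Eunif (fun f : {ffun 'I_T -> 'I_n} =>
           c * risk L z (iter_hat grad g eta (data_seq z f) T.-1) gam)
  <= Eunif (fun f : {ffun 'I_T -> 'I_n} =>
           c / T%:R * \sum_(k < T) risk L z (iter_w grad g eta (data_seq z f) k) gam)
  /\
  Eunif (fun f : {ffun 'I_T -> 'I_n} =>
           c / T%:R * \sum_(k < T) risk L z (iter_w grad g eta (data_seq z f) k) gam)
  <= eta / 2 * B + sqnorm wbar / (2 * eta * T%:R) + risk L z wbar g.
Proof.
move=> L_convex subgrad _ _ growth n_gt0 g_ge0 eta_gt0 c_gt0 T wb T_gt0 c gam.
have gam_ge0 : 0 <= gam by rewrite divr_ge0 // ltW.
split.
  apply: Eunif_le => f; rewrite -mulrA ler_pM2l //.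
  exact: iter_hat_convex_avg (risk_convex z L_convex gam_ge0) T_gt0.
have c_gam : c * gam = g by rewrite mulrCA mulfV ?mulr1 // gt_eqF.
rewrite Eunif_avg_risk // [c * gam]c_gam.
apply: (le_trans (ler_wpM2l _ (Eunif_le (fun f =>
  iter_w_regret subgrad growth g_ge0 eta_gt0 (data_seq z f) wb T)))).
  by rewrite invr_ge0 ler0n.
rewrite EunifD Eunif_sum (eq_bigr _ (fun k _ => Eunif_data_seq_cst z n_gt0 _ k)).
rewrite Eunif_cst // sumr_const card_ord -mulr_natl le_eqVlt; apply/orP; left; apply/eqP.
by rewrite /risk; field; rewrite !pnatr_eq0 -!lt0n n_gt0 T_gt0 gt_eqF.
Qed.
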